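(* Let $\{Y_{\mathbf z}\}_{\mathbf z\in\mathbb Z^2}$ be arbitrary positive real numbers and $\{W_k\}_{k\in\mathbb Z}$ arbitrary positive real numbers with $W_0=1$. Then for each $\mathbf a\in\mathbb Z^2_{>0}$ and each integer $k\ge1$, $$\frac{Z^W_{\mathbf a}(|\tau|\le k)}{Z^W_{\mathbf a-\mathbf e_1}(|\tau|\le k)}\le\frac{Z^W_{\mathbf a}(\tau\ge0)}{Z^W_{\mathbf a-\mathbf e_1}(\tau\ge0)}\qquad\text{and}\qquad\frac{Z^W_{\mathbf a}(|\tau|\le k)}{Z^W_{\mathbf a-\mathbf e_2}(|\tau|\le k)}\ge\frac{Z^W_{\mathbf a}(\tau\ge0)}{Z^W_{\mathbf a-\mathbf e_2}(\tau\ge0)}.$$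
   Context: $\mathbf e_1=(1,0)$, $\mathbf e_2=(0,1)$. For $\mathbf u,\mathbf v\in\mathbb Z^2$, $\widetilde Z_{\mathbf u,\mathbf v}=\sum_{\mathbf x_\bullet}\prod_{i=1}^nY_{\mathbf x_i}$, $n=|\mathbf v-\mathbf u|_1$, summing over up-right lattice paths $\mathbf x_0=\mathbf u,\dots,\mathbf x_n=\mathbf v$ (the weight at the starting point is excluded), $\widetilde Z_{\mathbf u,\mathbf u}=1$, and $\widetilde Z_{\mathbf u,\mathbf v}=0$ if no such path exists. For a set $\mathcal K\subset\mathbb Z$ and $\mathbf v$ with positive coordinate sum, $Z^W_{\mathbf v}(\tau\in\mathcal K)=\sum_{j\in\mathcal K}W_j\widetilde Z_{(j,-j),\mathbf v}$; thus $Z^W_{\mathbf v}(|\tau|\le k)=\sum_{|j|\le k}W_j\widetilde Z_{(j,-j),\mathbf v}$ and $Z^W_{\mathbf v}(\tau\ge0)=\sum_{j\ge0}W_j\widetilde Z_{(j,-j),\mathbf v}$. *)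

From mathcomp Require Import all_boot all_order all_algebra.
Set Implicit Arguments. Unset Strict Implicit. Unset Printing Implicit Defensive.
Import Order.TTheory GRing.Theory Num.Theory.
Local Open Scope ring_scope.

Definition pt := (int * int)%type.
Definition e1 : pt := (1, 0).
Definition e2 : pt := (0, 1).
Definition ptadd (x y : pt) : pt := (x.1 + y.1, x.2 + y.2).
Definition ptsub (x y : pt) : pt := (x.1 - y.1, x.2 - y.2).

Definition l1dist (u v : pt) : nat := (absz (v.1 - u.1) + absz (v.2 - u.2))%N.

(* An up-right path of length n from u is encoded by its step sequence
   s : n.-tuple bool (true = step e1, false = step e2).
   upos u s i = x_i, the position after the first i steps (x_0 = u). *)
Definition upos (u : pt) (s : seq bool) (i : nat) : pt :=
  (u.1 + (count id (take i s))%:Z, u.2 + (count negb (take i s))%:Z).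

(* Point-to-point partition function Z~_{u,v}: sum over up-right paths
   x_0 = u, ..., x_n = v with n = |v-u|_1 of prod_{i=1}^n Y_{x_i}.
   (Empty sum = 0 if no such path exists; equals 1 if u = v.) *)
Definition Zt (R : numDomainType) (Y : pt -> R) (u v : pt) : R :=
  let n := l1dist u v in
  \sum_(s : n.-tuple bool | upos u s n == v)
     \prod_(i < n) Y (upos u s i.+1).

(* Z^W_v(tau in K) = sum_{j in K} W_j Z~_{(j,-j),v}.  Only indices with
   -v.2 <= j <= v.1 can contribute (otherwise no up-right path exists),
   so the sum is taken over the window |j| <= |v.1| + |v.2|, which
   contains all nonzero terms. *)
Definition ZW (R : numDomainType) (Y : pt -> R) (W : int -> R)
    (K : pred int) (v : pt) : R :=
  let M := (absz v.1 + absz v.2)%N in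
  \sum_(i < (M + M).+1 | K (i%:Z - M%:Z))
     W (i%:Z - M%:Z) * Zt Y (i%:Z - M%:Z, - (i%:Z - M%:Z)) v.

Definition tau_absle (k : int) : pred int := fun j => `|j| <= k.
Definition tau_ge0 : pred int := fun j => 0 <= j.

(* Both partition functions solve the recursion Z_v = Y_v (Z_{v-e1} + Z_{v-e2})
   (split the paths at their last step) and differ only in their values
   W_j 1[j \in K] on the antidiagonal x_1 + x_2 = 0.  Let F be the one for
   K = {|j| <= k} and G the one for K = {j >= 0}.  The minors
   F(q) G(p) - G(q) F(p), for p weakly left of q on one antidiagonal, are
   nonpositive on the boundary, and the recursion expresses each such minor as
   a positive multiple of a sum of four minors of the previous antidiagonal.
   As a - e1 lies left of a - e2, and F(a) / F(a-e1) = Y_a (1 + F(a-e2) / F(a-e1)),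
   both inequalities follow. *)

From mathcomp Require Import all_boot all_order all_algebra.
From mathcomp Require Import ring lra zify.
Set Implicit Arguments. Unset Strict Implicit. Unset Printing Implicit Defensive.
Import Order.TTheory GRing.Theory Num.Theory.
Local Open Scope ring_scope.

Definition level (p : pt) : int := p.1 + p.2.

Lemma big_tuple_rcons (R : nmodType) n (F : seq bool -> R) :
  \sum_(t : n.+1.-tuple bool) F t =
  \sum_(t : n.-tuple bool) (F (rcons t true) + F (rcons t false)).
Proof.
rewrite (reindex (fun p : n.-tuple bool * bool => [tuple of rcons p.1 p.2])) /=.
  rewrite -(pair_big predT predT (fun (t : n.-tuple bool) b => F (rcons t b))) /=.
  by apply: eq_bigr => t _; rewrite big_bool.
have cons_ht (s : n.+1.-tuple bool) : thead s :: behead s = s.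
  exact: (esym (congr1 val (tuple_eta s))).
exists (fun t : n.+1.-tuple bool =>
          ([tuple of belast (thead t) (behead t)], last (thead t) (behead t))).
  move=> [t b] _; have := cons_ht [tuple of rcons t b].
  rewrite lastI /= => /rcons_inj [ht hb].
  by congr pair; [apply: val_inj|].
by move=> t _; apply: val_inj; rewrite /= -lastI cons_ht.
Qed.

Section PathSums.
Variables (R : numDomainType) (Y : pt -> R).

(* [Zt] with the path length decoupled from the endpoints. *)
Definition path_sum n (u w : pt) :=
  \sum_(s : n.-tuple bool | upos u s n == w) \prod_(i < n) Y (upos u s i.+1).

Lemma upos_size u (s : seq bool) :
  upos u s (size s) = (u.1 + (count id s)%:Z, u.2 + (count negb s)%:Z).
Proof. by rewrite /upos take_size. Qed.

Lemma upos_rcons u (t : seq bool) b i : (i <= size t)%N ->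
  upos u (rcons t b) i = upos u t i.
Proof. by move=> le_it; rewrite /upos -cats1 takel_cat. Qed.

Lemma upos_rcons_size u (t : seq bool) b :
  upos u (rcons t b) (size t).+1 = ptadd (upos u t (size t)) (if b then e1 else e2).
Proof.
rewrite -(size_rcons t b) !upos_size /ptadd -cats1 !count_cat /=.
by case: b; rewrite /e1 /e2 /=; congr pair; lia.
Qed.

Lemma ptadd_eq x e v : (ptadd x e == v) = (x == ptsub v e).
Proof.
case: x e v => [x1 x2] [d1 d2] [v1 v2]; rewrite /ptadd /ptsub /=.
by apply/eqP/eqP => -[h1 h2]; congr pair; lia.
Qed.

Lemma path_sum_eq0 n (u w : pt) :
  ~ [/\ 0 <= w.1 - u.1, 0 <= w.2 - u.2 & l1dist u w = n] -> path_sum n u w = 0.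
Proof.
move=> Nw; rewrite /path_sum big_pred0 // => -[s /= /eqP size_s].
apply/negP; rewrite -size_s upos_size => /eqP end_s; apply: Nw; rewrite -end_s /l1dist /=.
rewrite !(addrAC _ _ (- _)) !subrr !add0r; split=> //.
by rewrite -size_s -(count_predC id s).
Qed.

Lemma path_sumS n (u v : pt) :
  path_sum n.+1 u v = Y v * (path_sum n u (ptsub v e1) + path_sum n u (ptsub v e2)).
Proof.
rewrite /path_sum big_mkcond /= (@big_tuple_rcons _ n (fun s : seq bool =>
  if upos u s n.+1 == v then \prod_(i < n.+1) Y (upos u s i.+1) else 0)) mulrDr.
have last_step b : \sum_(t : n.-tuple bool)
    (if upos u (rcons t b) n.+1 == v then \prod_(i < n.+1) Y (upos u (rcons t b) i.+1) else 0)
    = Y v * path_sum n u (ptsub v (if b then e1 else e2)).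
  rewrite /path_sum [in RHS]big_mkcond mulr_sumr; apply: eq_bigr => t _.
  have := upos_rcons_size u t b; rewrite size_tuple => ->.
  rewrite ptadd_eq; case: eqP => [end_t|]; last by rewrite mulr0.
  rewrite big_ord_recr /= mulrC.
  have := upos_rcons_size u t b; rewrite size_tuple end_t => ->.
  congr (_ * _); last by apply: eq_bigr => i _; rewrite upos_rcons // size_tuple.
  by case: (b); case: (v) => v1 v2; rewrite /ptadd /ptsub /=; congr (Y (_, _)); ring.
by rewrite big_split /= (last_step true) (last_step false).
Qed.

Lemma Zt_eq0 (u w : pt) : ~ (0 <= w.1 - u.1 /\ 0 <= w.2 - u.2) -> Zt Y u w = 0.
Proof.
by move=> Nw; apply: path_sum_eq0 => -[h1 h2 _]; apply: Nw.
Qed.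

Lemma Zt_path_sum n (u v : pt) : level v = level u + n%:Z -> Zt Y u v = path_sum n u v.
Proof.
move=> lev; change (path_sum (l1dist u v) u v = path_sum n u v).
have [<- // | ne] := eqVneq (l1dist u v) n.
by rewrite !path_sum_eq0 // => -[h1 h2 _]; move/eqP: ne; apply;
  rewrite /l1dist /level in lev *; lia.
Qed.

Lemma Zt_refl v : Zt Y v v = 1.
Proof.
rewrite (@Zt_path_sum 0) ?addr0 // /path_sum (big_pred1 [tuple]) ?big_ord0 // => s.
by rewrite tuple0 /upos /= !addr0 -surjective_pairing eqxx.
Qed.

Lemma Zt_rec (u v : pt) : level u < level v ->
  Zt Y u v = Y v * (Zt Y u (ptsub v e1) + Zt Y u (ptsub v e2)).
Proof.
move=> lt_uv; set n := absz (level v - level u - 1)%R.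
rewrite (@Zt_path_sum n.+1) ?path_sumS ?(@Zt_path_sum n) //;
  by rewrite /n /level /ptsub /= in lt_uv *; lia.
Qed.

End PathSums.

Section WeightedSums.
Variables (R : numDomainType) (Y : pt -> R) (W : int -> R).

Definition ZW_term (K : pred int) (v : pt) (j : int) :=
  if K j then W j * Zt Y (j, - j) v else 0.

Lemma ZW_term_eq0 K (v : pt) j : (j < - v.2) || (v.1 < j) -> ZW_term K v j = 0.
Proof.
move=> out_j; rewrite /ZW_term; case: ifP => // _.
by rewrite Zt_eq0 ?mulr0 //= => -[]; case/orP: out_j; lia.
Qed.

Lemma sum_window (f : int -> R) (M N : nat) :
  (forall j, (j < - M%:Z) || (M%:Z < j) -> f j = 0) -> (M <= N)%N ->
  \sum_(0 <= i < (N + N).+1) f (i%:Z - N%:Z) = \sum_(0 <= i < (M + M).+1) f (i%:Z - M%:Z).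
Proof.
move=> f_out /subnKC <-; elim: (N - M)%N => [|d IHd]; first by rewrite addn0.
rewrite -IHd addnS addSn big_nat_recr //= big_nat_recl // !f_out ?add0r ?addr0;
  try by apply/orP; lia.
by rewrite addnS; apply: eq_bigr => i _; congr f; lia.
Qed.

Lemma ZW_window K (v : pt) (N : nat) : (absz v.1 + absz v.2 <= N)%N ->
  ZW Y W K v = \sum_(0 <= i < (N + N).+1) ZW_term K v (i%:Z - N%:Z).
Proof.
move=> le_vN; have out_eq0 j : (j < - (absz v.1 + absz v.2)%:Z) || ((absz v.1 + absz v.2)%:Z < j) ->
    ZW_term K v j = 0 by move=> out_j; apply: ZW_term_eq0; case/orP: out_j; lia.
by rewrite (sum_window out_eq0 le_vN) /ZW big_mkcond big_mkord.
Qed.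

Lemma ZW_rec K (v : pt) : 0 < level v ->
  ZW Y W K v = Y v * (ZW Y W K (ptsub v e1) + ZW Y W K (ptsub v e2)).
Proof.
move=> lev_v; set N := (absz v.1 + absz v.2).+1.
rewrite !(@ZW_window K _ N) ?leqnSn; try by rewrite /N /ptsub /=; lia.
rewrite -big_split /= mulr_sumr; apply: eq_bigr => i _; rewrite /ZW_term.
case: ifP => _; last by rewrite addr0 mulr0.
by rewrite Zt_rec; [ring | rewrite /level /= in lev_v *; lia].
Qed.

Lemma ZW_level0 K (v : pt) : level v = 0 -> ZW Y W K v = if K v.1 then W v.1 else 0.
Proof.
move=> lev_v; rewrite (@ZW_window K v (absz v.1 + absz v.2)) //.
set M := (absz v.1 + absz v.2)%N; set i0 := absz (v.1 + M%:Z).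
have i0_in : i0 \in index_iota 0 (M + M).+1 by rewrite mem_index_iota /i0 /M; lia.
rewrite (bigD1_seq i0 i0_in (iota_uniq _ _)) /= big1_seq ?addr0 => [|i /andP [ne_i _]].
  have -> : i0%:Z - M%:Z = v.1 by rewrite /i0 /M; lia.
  rewrite /ZW_term.
  have -> : (v.1, - v.1) = v by move: lev_v; rewrite /level; case: (v) => v1 v2 /= ?; congr pair; lia.
  by rewrite Zt_refl mulr1.
apply: ZW_term_eq0; apply/orP; move: ne_i; rewrite /i0 /M /level in lev_v *; lia.
Qed.

End WeightedSums.

Lemma ZW_ge0 (R : numDomainType) (Y : pt -> R) (W : int -> R) K v :
  (forall z, 0 <= Y z) -> (forall j, 0 <= W j) -> 0 <= ZW Y W K v.
Proof.
move=> Y_ge0 W_ge0; apply: sumr_ge0 => i _; apply: mulr_ge0 => //.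
by apply: sumr_ge0 => s _; apply: prodr_ge0.
Qed.

Lemma ZW_tau_ratio_level0 (R : numDomainType) (Y : pt -> R) (W : int -> R) k p q :
  (forall j, 0 <= W j) -> level p = 0 -> level q = 0 -> p.1 <= q.1 ->
  ZW Y W (tau_absle k) q * ZW Y W tau_ge0 p <= ZW Y W tau_ge0 q * ZW Y W (tau_absle k) p.
Proof.
(* If |q.1| <= k and p.1 >= 0 then 0 <= p.1 <= q.1 <= k, so both sides are
   W_{q.1} W_{p.1}; otherwise the left side vanishes. *)
move=> W_ge0 lev_p lev_q le_pq; rewrite !ZW_level0 // /tau_absle /tau_ge0.
have ite_ge0 b j : 0 <= (if b then W j else 0) by case: b.
case: ifP => [q_in | _]; last by rewrite mul0r mulr_ge0.
case: ifP => [p_in | _]; last by rewrite mulr0 mulr_ge0.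
by rewrite !ifT ?[W q.1 * _]mulrC //; lia.
Qed.

Section UpRightRecursion.
Variables (R : realDomainType) (Y : pt -> R).
Hypothesis Y_gt0 : forall z, 0 < Y z.

Definition up_right_rec (F : pt -> R) :=
  forall v, 0 < level v -> F v = Y v * (F (ptsub v e1) + F (ptsub v e2)).

Lemma up_right_rec_gt0 F : up_right_rec F -> (forall p, 0 <= F p) -> 0 < F (0, 0) ->
  forall p : pt, 0 <= p.1 -> 0 <= p.2 -> 0 < F p.
Proof.
move=> recF F_ge0 F00 p p1_ge0 p2_ge0.
have [n lev_p] : exists n : nat, level p = n%:Z.
  by exists (absz (level p)); rewrite /level; lia.
elim: n p lev_p p1_ge0 p2_ge0 => [|n IHn] p lev_p p1_ge0 p2_ge0.
  have -> : p = (0, 0).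
    by move: lev_p; rewrite /level; case: p p1_ge0 p2_ge0 => ? ? /= *; congr pair; lia.
  exact: F00.
rewrite /level in lev_p; rewrite recF ?mulr_gt0 //; last by rewrite /level; lia.
have [p1_gt0 | p1_le0] := ltrP 0 p.1.
  by apply: ltr_wpDr (F_ge0 _) (IHn _ _ _ _); rewrite /level /ptsub /=; lia.
by apply: ltr_wpDl (F_ge0 _) (IHn _ _ _ _); rewrite /level /ptsub /=; lia.
Qed.

Definition ratio_noninc (F G : pt -> R) (n : int) :=
  forall p q, level p = n -> level q = n -> p.1 <= q.1 -> F q * G p <= G q * F p.

Lemma ratio_nonincS F G (n : int) : up_right_rec F -> up_right_rec G -> 0 <= n ->
  ratio_noninc F G n -> ratio_noninc F G (n + 1).
Proof.
move=> recF recG n_ge0 IHn p q lev_p lev_q le_pq.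
have [eq_pq | lt_pq] := eqVneq p.1 q.1.
  have -> : p = q.
    by move: lev_p lev_q eq_pq; rewrite /level; case: (p); case: (q) => ? ? ? ? /= *; congr pair; lia.
  by rewrite mulrC.
have {lt_pq} lt_pq : p.1 < q.1 by rewrite lt_def eq_sym lt_pq le_pq.
have lev_ptsub (x : pt) d : level x = n + 1 -> d.1 + d.2 = 1 -> level (ptsub x d) = n.
  by rewrite /level /ptsub /=; lia.
rewrite (recF q) 1?(recG q) 1?(recF p) 1?(recG p) ?lev_p ?lev_q; try lia.
(* Every shift of q lies weakly right of every shift of p: the four cross
   terms of the recursion are minors of level n. *)
have c11 : F (ptsub q e1) * G (ptsub p e1) <= G (ptsub q e1) * F (ptsub p e1).
  by apply: IHn; rewrite ?lev_ptsub //=; lia.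
have c12 : F (ptsub q e1) * G (ptsub p e2) <= G (ptsub q e1) * F (ptsub p e2).
  by apply: IHn; rewrite ?lev_ptsub //=; lia.
have c21 : F (ptsub q e2) * G (ptsub p e1) <= G (ptsub q e2) * F (ptsub p e1).
  by apply: IHn; rewrite ?lev_ptsub //=; lia.
have c22 : F (ptsub q e2) * G (ptsub p e2) <= G (ptsub q e2) * F (ptsub p e2).
  by apply: IHn; rewrite ?lev_ptsub //=; lia.
rewrite mulrACA [X in _ <= X]mulrACA ler_pM2l ?mulr_gt0 //.
by rewrite !mulrDl !mulrDr; lra.
Qed.

Lemma ratio_noninc_levels F G : up_right_rec F -> up_right_rec G ->
  ratio_noninc F G 0 -> forall n : nat, ratio_noninc F G n%:Z.
Proof.
move=> recF recG base; elim=> [// | n IHn].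
by rewrite -addn1 PoszD; apply: ratio_nonincS.
Qed.

End UpRightRecursion.

Lemma cross_le_ratios (R : realFieldType) (c x1 x2 y1 y2 : R) :
  0 < c -> 0 < x1 -> 0 < x2 -> 0 < y1 -> 0 < y2 -> x2 * y1 <= y2 * x1 ->
  c * (x1 + x2) / x1 <= c * (y1 + y2) / y1 /\ c * (y1 + y2) / y2 <= c * (x1 + x2) / x2.
Proof.
move=> c_gt0 x1_gt0 x2_gt0 y1_gt0 y2_gt0 cross.
by split; rewrite ler_pdivrMr // mulrAC ler_pdivlMr // -!mulrA ler_pM2l // !mulrDl; lra.
Qed.

Theorem propositionA4 (R : realFieldType) (Y : pt -> R) (W : int -> R)
  (hY : forall z, 0 < Y z) (hW : forall j, 0 < W j) (hW0 : W 0 = 1)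
  (a : pt) (ha1 : 0 < a.1) (ha2 : 0 < a.2) (k : int) (hk : 1 <= k) :
  ZW Y W (tau_absle k) a / ZW Y W (tau_absle k) (ptsub a e1)
    <= ZW Y W tau_ge0 a / ZW Y W tau_ge0 (ptsub a e1)
  /\
  ZW Y W (tau_absle k) a / ZW Y W (tau_absle k) (ptsub a e2)
    >= ZW Y W tau_ge0 a / ZW Y W tau_ge0 (ptsub a e2).
Proof.
set F := ZW Y W (tau_absle k); set G := ZW Y W tau_ge0.
have Y_ge0 z : 0 <= Y z := ltW (hY z).
have W_ge0 j : 0 <= W j := ltW (hW j).
have recF : up_right_rec Y F by move=> v; apply: ZW_rec.
have recG : up_right_rec Y G by move=> v; apply: ZW_rec.
have F_gt0 : forall p : pt, 0 <= p.1 -> 0 <= p.2 -> 0 < F p.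
  apply: (up_right_rec_gt0 hY recF) => [p|]; first exact: ZW_ge0.
  by rewrite /F ZW_level0 //= /tau_absle ifT //; lia.
have G_gt0 : forall p : pt, 0 <= p.1 -> 0 <= p.2 -> 0 < G p.
  apply: (up_right_rec_gt0 hY recG) => [p|]; first exact: ZW_ge0.
  by rewrite /G ZW_level0 //= /tau_ge0 lexx.
have cross : F (ptsub a e2) * G (ptsub a e1) <= G (ptsub a e2) * F (ptsub a e1).
  have base : ratio_noninc F G 0 by move=> p q; apply: ZW_tau_ratio_level0.
  by apply: (ratio_noninc_levels hY recF recG base (n := absz (level a - 1)));
    rewrite /level /ptsub /=; lia.
have lev_a : 0 < level a by rewrite /level; lia.
rewrite (recF a lev_a) (recG a lev_a).
by apply: cross_le_ratios; rewrite ?F_gt0 ?G_gt0 /ptsub //=; lia.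
Qed.
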